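(* Let $G$ be a group acting on the binary tree. If $G$ contains a weakly branch group, then $G$ is weakly branch. If $G$ contains a subgroup $H$ such that, for every $n\in\mathbb N$, $(\mho_2)^n(H)$ acts transitively on every subtree at level $n$, then $G$ is saturated.
   Context: The binary tree is $\mathcal T=X^*$, $X=\{0,1\}$, with isometry group $W$; $G\le W$. For $v\in X^*$, $g\in W$: $v*g$ acts as $g$ on the subtree $v\mathcal T$ and fixes other vertices; $g@v$ is the state, $(vw)^g=v^gw^{g@v}$. $G$ is level-transitive if transitive on each $X^n$; weakly branch if level-transitive and $(v*G)\cap G\ne1$ for all $v\in X^*$; saturated if for every $n$ it contains a characteristic subgroup $H_n$ fixing $X^n$ with $\{h@v:h\in H_n\}$ level-transitive for all $v\in X^n$. $\mho_2(H)$ is the subgroup generated by squares of elements of $H$, and $(\mho_2)^n$ its $n$-fold iterate. ''Acts transitively on every subtree at level $n$'' means that for each $v\in X^n$ the group fixes $v$ and its restriction to $v\mathcal T$ is level-transitive. *)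

From mathcomp Require Import all_boot.
Set Implicit Arguments. Unset Strict Implicit. Unset Printing Implicit Defensive.

(* Vertices of the binary tree T = X^*, X = {0,1}, encoded as bool lists;
   the level of v is size v. *)
Definition vertex := seq bool.

Definition tmap := vertex -> vertex.

Definition is_tree_aut (f : tmap) : Prop :=
  bijective f /\
  (forall v, size (f v) = size v) /\
  (forall v w, take (size v) (f (v ++ w)) = f v).

Definition W (f : tmap) : Prop := is_tree_aut f.

(* Right action convention: v^(g h) = (v^g)^h. *)
Definition tmul (g h : tmap) : tmap := fun v => h (g v).
Definition tid : tmap := fun v => v.

Definition tset := tmap -> Prop.
Definition tsubset (A B : tset) : Prop := forall g, A g -> B g.

Definition subgroupW (K : tset) : Prop :=
  tsubset K W /\ K tid /\
  (forall g h, K g -> K h -> K (tmul g h)) /\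
  (forall g, K g -> exists h, K h /\ tmul g h = tid /\ tmul h g = tid).

Definition vstar (v : vertex) (g : tmap) : tmap := fun w =>
  if take (size v) w == v then v ++ g (drop (size v) w) else w.

(* state g@v, defined by (vw)^g = v^g w^(g@v). *)
Definition state (g : tmap) (v : vertex) : tmap := fun w =>
  drop (size v) (g (v ++ w)).

Definition level_transitive (K : tset) : Prop :=
  forall (n : nat) (u w : vertex), size u = n -> size w = n ->
    exists g, K g /\ g u = w.

Definition weakly_branch (G : tset) : Prop :=
  level_transitive G /\
  forall v : vertex, exists g, G g /\ G (vstar v g) /\ vstar v g <> tid.

Definition group_aut (G : tset) (phi : tmap -> tmap) : Prop :=
  (forall g, G g -> G (phi g)) /\
  (forall g h, G g -> G h -> phi g = phi h -> g = h) /\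
  (forall g, G g -> exists h, G h /\ phi h = g) /\
  (forall g h, G g -> G h -> phi (tmul g h) = tmul (phi g) (phi h)).

Definition characteristic (H G : tset) : Prop :=
  subgroupW H /\ tsubset H G /\
  forall phi, group_aut G phi -> forall h, H h -> H (phi h).

Definition fixes_level (H : tset) (n : nat) : Prop :=
  forall h v, H h -> size v = n -> h v = v.

Definition states_at (H : tset) (v : vertex) : tset :=
  fun k => exists h, H h /\ k = state h v.

Definition saturated (G : tset) : Prop :=
  forall n : nat, exists Hn : tset,
    characteristic Hn G /\ fixes_level Hn n /\
    forall v : vertex, size v = n -> level_transitive (states_at Hn v).

Definition generated (S : tset) : tset :=
  fun g => forall K, subgroupW K -> tsubset S K -> K g.

Definition mho2 (H : tset) : tset :=
  generated (fun g => exists h, H h /\ g = tmul h h).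

(* K acts transitively on every subtree at level n: K fixes every v in X^n
   and its restriction to vT is level-transitive. *)
Definition transitive_on_subtrees (K : tset) (n : nat) : Prop :=
  fixes_level K n /\
  forall v : vertex, size v = n -> level_transitive (states_at K v).

From mathcomp Require Import all_boot.
Set Implicit Arguments. Unset Strict Implicit. Unset Printing Implicit Defensive.

(* Being weakly branch only asks for enough elements, so it passes to overgroups.
   For saturation take H_n = (mho_2)^n(G).  It is characteristic because mho_2 of
   a characteristic subgroup is characteristic.  It fixes X^n: on the binary tree
   an element fixing X^n permutes the two children of each v in X^n, so its
   square fixes X^(n+1), and the stabiliser of X^(n+1) is a subgroup.  Finally
   H_n contains (mho_2)^n(H), whose states at level n are already level-transitive. *)

Lemma tmul_inv_uniq g h h' : tmul g h = tid -> tmul h' g = tid -> h = h'.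
Proof.
move=> gh h'g.
have assoc : tmul (tmul h' g) h = tmul h' (tmul g h) by [].
by rewrite gh h'g in assoc.
Qed.

Lemma level_transitiveS A B : tsubset A B -> level_transitive A -> level_transitive B.
Proof.
move=> AB trA n u w su sw; have [g [Ag guw]] := trA n u w su sw.
by exists g; split; first exact: AB.
Qed.

Lemma weakly_branchS K G : tsubset K G -> weakly_branch K -> weakly_branch G.
Proof.
move=> KG [trK brK]; split; first exact: level_transitiveS trK.
by move=> v; have [g [Kg [Kvg vg1]]] := brK v; exists g; split; [|split]; try apply: KG.
Qed.

Lemma states_atS A B v : tsubset A B -> tsubset (states_at A v) (states_at B v).
Proof. by move=> AB k [h [Ah ->]]; exists h; split; first exact: AB. Qed.

Lemma sub_generated S : tsubset S (generated S).
Proof. by move=> g Sg K _; apply. Qed.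

Lemma generated_min S K : subgroupW K -> tsubset S K -> tsubset (generated S) K.
Proof. by move=> subK SK g; apply. Qed.

Lemma subgroupW_generated S K : subgroupW K -> tsubset S K -> subgroupW (generated S).
Proof.
move=> subK SK; split; first by move=> g /(generated_min subK SK); apply: subK.1.
split; first by move=> L [_ []].
split=> [g h gSg gSh L subL SL | g gSg].
  by apply: subL.2.2.1; [apply: gSg | apply: gSh].
have [h [_ [gh hg]]] := subK.2.2.2 g (generated_min subK SK gSg).
exists h; split=> // L subL SL.
have [h' [Lh' [_ h'g]]] := subL.2.2.2 g (gSg L subL SL).
by rewrite (tmul_inv_uniq gh h'g).
Qed.

Section GeneratedInd.

Variables (S K : tset) (P : tmap -> Prop).
Hypotheses (subK : subgroupW K) (SK : tsubset S K) (SP : tsubset S P) (P1 : P tid).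
Hypothesis PM : forall g h, K g -> K h -> P g -> P h -> P (tmul g h).
Hypothesis PV : forall g h, K g -> K h -> tmul g h = tid -> tmul h g = tid -> P g -> P h.

Lemma generated_ind g : generated S g -> P g.
Proof.
have subKP : subgroupW (fun g => K g /\ P g).
  split; first by move=> g' [Kg' _]; apply: subK.1.
  split; first by split=> //; apply: subK.2.1.
  split=> [g1 g2 [Kg1 Pg1] [Kg2 Pg2] | g' [Kg' Pg']].
    by split; [apply: subK.2.2.1 | apply: PM].
  have [h [Kh [g'h hg']]] := subK.2.2.2 g' Kg'.
  by exists h; split=> //; split=> //; apply: PV g'h hg' Pg'.
have SKP : tsubset S (fun g => K g /\ P g) by move=> s Ss; split; [apply: SK | apply: SP].
by move=> /(generated_min subKP SKP) [].
Qed.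

End GeneratedInd.

Definition squares (K : tset) : tset := fun g => exists h, K h /\ g = tmul h h.

Lemma squares_sub K : subgroupW K -> tsubset (squares K) K.
Proof. by move=> subK g [h [Kh ->]]; apply: subK.2.2.1. Qed.

Lemma mho2_sub K : subgroupW K -> tsubset (mho2 K) K.
Proof. by move=> subK; apply: generated_min (squares_sub subK). Qed.

Lemma subgroupW_mho2 K : subgroupW K -> subgroupW (mho2 K).
Proof. by move=> subK; apply: subgroupW_generated (squares_sub subK). Qed.

Lemma mho2S A B : tsubset A B -> tsubset (mho2 A) (mho2 B).
Proof.
move=> AB g gA L subL SL; apply: gA subL _ => _ [h [Ah ->]].
by apply: SL; exists h; split; first exact: AB.
Qed.

Lemma iter_mho2S n A B : tsubset A B -> tsubset (iter n mho2 A) (iter n mho2 B).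
Proof. by move=> AB; elim: n => [|n IHn] //=; apply: mho2S. Qed.

Lemma subgroupW_iter_mho2 n K : subgroupW K -> subgroupW (iter n mho2 K).
Proof. by move=> subK; elim: n => [|n IHn] //=; apply: subgroupW_mho2. Qed.

Lemma tree_aut_rcons g u c : W g -> g u = u ->
  g (rcons u c) = rcons u (last c (g (rcons u c))).
Proof.
move=> [_ [size_g take_g]] gu.
have := take_g u [:: c]; rewrite gu cats1.
have := size_g (rcons u c); rewrite size_rcons.
case/lastP: (g (rcons u c)) => [|x d] //; rewrite size_rcons last_rcons => -[<-].
by rewrite -!cats1 take_size_cat // => ->.
Qed.

Lemma bool_inj_involutive (f : bool -> bool) : injective f -> involutive f.
Proof.
move=> injf; have ne : f true != f false by apply/eqP => /injf.
by case=> /=; case fT: (f true) ne; case fF: (f false); rewrite ?fT ?fF.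
Qed.

Lemma sqr_fixes_succ_level n g : W g -> (forall v, size v = n -> g v = v) ->
  forall v, size v = n.+1 -> tmul g g v = v.
Proof.
move=> Wg fix_g v; case/lastP: v => [|u b] //; rewrite size_rcons => -[/fix_g gu].
pose sigma c := last c (g (rcons u c)).
have g_child c : g (rcons u c) = rcons u (sigma c) by apply: tree_aut_rcons.
have inj_g : injective g by case: Wg => [[g' gK _] _]; apply: can_inj gK.
have inj_sigma : injective sigma.
  by move=> c c' /(congr1 (rcons u)); rewrite -!g_child => /inj_g /rcons_inj [].
by rewrite /tmul !g_child bool_inj_involutive.
Qed.

Lemma fixes_level_mho2 n K : subgroupW K -> fixes_level K n -> fixes_level (mho2 K) n.+1.
Proof.
move=> subK fixK g v gK; move: g gK v.
apply: (generated_ind subK (squares_sub subK)) => //.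
- by move=> _ [h [Kh ->]]; apply: sqr_fixes_succ_level (subK.1 h Kh) _ => w; apply: fixK.
- by move=> g h _ _ fix_g fix_h v sv; rewrite /tmul fix_g ?fix_h.
- by move=> g h _ _ gh _ fix_g v sv; rewrite -[RHS](congr1 (@^~ v) gh) /tmul fix_g.
Qed.

Lemma fixes_level_iter_mho2 n G : subgroupW G -> fixes_level (iter n mho2 G) n.
Proof.
move=> subG; elim: n => [|n IHn] /=.
  by move=> g v Gg /size0nil ->; apply/size0nil; rewrite (subG.1 g Gg).2.1.
exact: fixes_level_mho2 (subgroupW_iter_mho2 n subG) IHn.
Qed.

Lemma group_aut_id G phi : subgroupW G -> group_aut G phi -> phi tid = tid.
Proof.
move=> subG [phiG [_ [_ phiM]]].
have [h [_ [e1h _]]] := subG.2.2.2 _ (phiG _ subG.2.1).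
have idem : tmul (phi tid) (phi tid) = phi tid by rewrite -phiM //; apply: subG.2.1.
have assoc : tmul (tmul (phi tid) (phi tid)) h = tmul (phi tid) (tmul (phi tid) h) by [].
by rewrite idem e1h in assoc.
Qed.

Lemma characteristic_mho2 K G : subgroupW G -> characteristic K G ->
  characteristic (mho2 K) G.
Proof.
move=> subG [subK [KG phiK]]; have subM := subgroupW_mho2 subK.
split=> //; split; first by move=> g /(mho2_sub subK) /KG.
move=> phi autG; have [phiG [_ [_ phiM]]] := autG; have phi1 := group_aut_id subG autG.
have sqKG : tsubset (squares K) G by move=> g /(squares_sub subK) /KG.
apply: (generated_ind subG sqKG) => [_ [h [Kh ->]] | | g h Gg Gh | g h Gg Gh gh _].
- rewrite phiM; try exact: KG.
  by apply: sub_generated; exists (phi h); split; first exact: phiK.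
- by rewrite phi1; apply: subM.2.1.
- by rewrite phiM //; apply: subM.2.2.1.
move=> /subM.2.2.2 [h' [Mh' [_ h'g]]].
have phigh : tmul (phi g) (phi h) = tid by rewrite -phiM // gh.
by rewrite (tmul_inv_uniq phigh h'g).
Qed.

Lemma characteristic_iter_mho2 n G : subgroupW G -> characteristic (iter n mho2 G) G.
Proof.
move=> subG; elim: n => [|n IHn] /=; last exact: characteristic_mho2.
by split=> //; split=> // phi [].
Qed.

Theorem lemma3p9 (G : tset) (hG : subgroupW G) :
  ((exists K : tset, subgroupW K /\ tsubset K G /\ weakly_branch K) ->
     weakly_branch G) /\
  ((exists H : tset, subgroupW H /\ tsubset H G /\
      forall n : nat, transitive_on_subtrees (iter n mho2 H) n) ->
     saturated G).
Proof.
split=> [[K [_ [KG wbK]]] | [H [_ [HG trH]]] n]; first exact: weakly_branchS wbK.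
exists (iter n mho2 G); split; first exact: characteristic_iter_mho2.
split; first exact: fixes_level_iter_mho2.
move=> v sv; apply: level_transitiveS ((trH n).2 v sv).
exact/states_atS/iter_mho2S.
Qed.
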